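(* Let $g$ be a continuous function on $[a,b]$ which is DC on $(a,b)$, and let $P\subset[a,b]$ be a nowhere dense set. Then the set $g(P)$ is nowhere dense in $\mathbb{R}$.
   Context: A function on an open interval is DC if it is the difference of two convex functions on that interval. *)

From HB Require Import structures.
From mathcomp Require Import all_boot all_order all_algebra.
From mathcomp Require Import all_classical all_reals all_analysis.
Set Implicit Arguments. Unset Strict Implicit. Unset Printing Implicit Defensive.
Import Order.TTheory GRing.Theory Num.Theory numFieldNormedType.Exports.
Local Open Scope classical_set_scope.
Local Open Scope ring_scope.

Definition convex_on (R : realType) (I : set R) (f : R -> R) : Prop :=
  forall x y t, I x -> I y -> 0 <= t -> t <= 1 ->
    f (t * x + (1 - t) * y) <= t * f x + (1 - t) * f y.

Definition DC_on (R : realType) (I : set R) (g : R -> R) : Prop :=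
  exists g1 g2 : R -> R, convex_on I g1 /\ convex_on I g2 /\
    forall x, I x -> g x = g1 x - g2 x.

Definition nowhere_dense (T : topologicalType) (A : set T) : Prop :=
  interior (closure A) = set0.

From HB Require Import structures.
From mathcomp Require Import all_boot all_order all_algebra.
From mathcomp Require Import all_classical all_reals all_analysis.
From mathcomp Require Import ring lra.
Import Order.TTheory GRing.Theory Num.Theory numFieldNormedType.Exports.
Local Open Scope classical_set_scope.
Local Open Scope ring_scope.

(* Convex functions have one-sided
   derivatives, so for every eta > 0 each point of (a, b) has one-sided
   neighbourhoods on which all difference quotients of g lie in an interval of
   length eta; on such a neighbourhood [p, q] the function g is strictly
   monotone or eta-Lipschitz. A continuous strictly monotone image of a nowhere
   dense set is nowhere dense, and an eta-Lipschitz image of a subset of [p, q]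
   lies in an interval of length 2 eta (q - p). Gluing along a compact
   [c, d] in (a, b) by real induction, g(P ∩ [c, d]) lies in a nowhere dense
   set plus finitely many intervals of total length as small as we like; by
   continuity at a and b so does g(P). A subset of R with this property is
   nowhere dense. *)

Lemma ler_pdiv_cross (R : realFieldType) (x y u v : R) : 0 < u -> 0 < v ->
  (x / u <= y / v) = (x * v <= y * u).
Proof. by move=> u0 v0; rewrite ler_pdivrMr // mulrAC ler_pdivlMr. Qed.

Section Slopes.
Context {R : realType}.
Implicit Types (f g : R -> R) (a b m p q r x : R).

Definition slope f p q := (f q - f p) / (q - p).

Lemma slope_midpoint f p d : 0 < d ->
  slope f p (p + 2 * d) = (slope f p (p + d) + slope f (p + d) (p + 2 * d)) / 2.
Proof. by move=> d0; rewrite /slope; field; apply/andP; split; apply: lt0r_neq0; lra. Qed.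

Lemma slope_gt0 f p q : p < q -> (0 < slope f p q) = (f p < f q).
Proof. by move=> pq; rewrite /slope pmulr_lgt0 ?invr_gt0 ?subr_gt0. Qed.

Lemma slope_lt0 f p q : p < q -> (slope f p q < 0) = (f q < f p).
Proof. by move=> pq; rewrite /slope pmulr_llt0 ?invr_gt0 ?subr_gt0 // subr_lt0. Qed.

Lemma mul_slope f p q : p != q -> slope f p q * (q - p) = f q - f p.
Proof. by move=> pq; rewrite /slope divfK // subr_eq0 eq_sym. Qed.

Lemma slope_refl f p q : slope (fun y => f (- y)) p q = - slope f (- q) (- p).
Proof. by rewrite /slope -mulNr opprB opprK [- p + q]addrC. Qed.

Definition slopes_pinched f e p q := exists m,
  forall x y, p <= x -> x < y -> y <= q -> m <= slope f x y <= m + e.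

Lemma slopes_pinchedS f e p q p' q' : p <= p' -> q' <= q ->
  slopes_pinched f e p q -> slopes_pinched f e p' q'.
Proof. by move=> pp' q'q [m Hm]; exists m => x y px xy yq; apply: Hm; lra. Qed.

Lemma slopes_pinchedB f h g e1 e2 p q :
  (forall y, p <= y <= q -> g y = f y - h y) ->
  slopes_pinched f e1 p q -> slopes_pinched h e2 p q ->
  slopes_pinched g (e1 + e2) p q.
Proof.
move=> gE [m1 H1] [m2 H2]; exists (m1 - m2 - e2) => x y px xy yq.
have gx : g x = f x - h x by apply: gE; apply/andP; split; lra.
have gy : g y = f y - h y by apply: gE; apply/andP; split; lra.
have -> : slope g x y = slope f x y - slope h x y.
  by rewrite /slope -mulrBl gx gy; congr (_ * _); ring.
by have := H1 x y px xy yq; have := H2 x y px xy yq; lra.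
Qed.

Lemma slopes_pinched_cases {f e p q} : slopes_pinched f e p q -> [\/
  forall x y, p <= x -> x < y -> y <= q -> f x < f y,
  forall x y, p <= x -> x < y -> y <= q -> f y < f x |
  forall x, p <= x -> x <= q -> f p - e * (q - p) <= f x <= f p + e * (q - p)].
Proof.
move=> [m Hm].
have [m0|m0] := ltP 0 m.
  apply: Or31 => x y px xy yq; rewrite -slope_gt0 //.
  by have := Hm x y px xy yq; lra.
have [me|me] := ltP (m + e) 0.
  apply: Or32 => x y px xy yq; rewrite -slope_lt0 //.
  by have := Hm x y px xy yq; lra.
apply: Or33 => x px xq; have h3 : 0 <= e * (q - x) by apply: mulr_ge0; lra.
have [xE|ltpx] := eqVneq p x; first by rewrite -xE in h3 *; apply/andP; split; lra.
have {}px : p < x by rewrite lt_neqAle ltpx.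
have := mul_slope f p x ltpx; have := Hm p x (lexx _) px xq.
set s := slope f p x => /andP[s1 s2] fx.
have h1 : 0 <= (e - s) * (x - p) by apply: mulr_ge0; lra.
have h2 : 0 <= (s + e) * (x - p) by apply: mulr_ge0; lra.
apply/andP; split; nra.
Qed.

Section Convex.
Context {a b : R} {f : R -> R}.
Hypothesis cf : convex_on `]a, b[ f.

Lemma convex_on_chord p q r :
  a < p -> p < q -> q < r -> r < b ->
  (r - p) * f q <= (r - q) * f p + (q - p) * f r.
Proof.
move=> ap pq qr rb.
have rp : 0 < r - p by lra.
set t := (r - q) / (r - p).
have t0 : 0 <= t by apply: divr_ge0; lra.
have t1 : t <= 1 by rewrite ler_pdivrMr //; lra.
have Ip : p \in `]a, b[ by rewrite in_itv /=; apply/andP; split; lra.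
have Ir : r \in `]a, b[ by rewrite in_itv /=; apply/andP; split; lra.
have := cf p r t Ip Ir t0 t1.
have -> : t * p + (1 - t) * r = q by rewrite /t; field; lra.
have -> : (r - q) * f p + (q - p) * f r = (r - p) * (t * f p + (1 - t) * f r).
  by rewrite /t; field; lra.
by rewrite ler_pM2l.
Qed.

Lemma convex_slope_leR p q r :
  a < p -> p < q -> q <= r -> r < b -> slope f p q <= slope f p r.
Proof.
move=> ap pq qr rb; have [<-//|ltqr] := eqVneq q r.
have {}qr : q < r by rewrite lt_neqAle ltqr.
have := convex_on_chord p q r ap pq qr rb.
rewrite /slope ler_pdiv_cross; lra.
Qed.

Lemma convex_slope_leL p q r :
  a < p -> p <= q -> q < r -> r < b -> slope f p r <= slope f q r.
Proof.
move=> ap pq qr rb; have [<-//|ltpq] := eqVneq p q.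
have {}pq : p < q by rewrite lt_neqAle ltpq.
have := convex_on_chord p q r ap pq qr rb.
rewrite /slope ler_pdiv_cross; lra.
Qed.

Lemma convex_slope_le p q p' q' :
  a < p -> p <= p' -> q <= q' -> p < q -> p' < q' -> q' < b ->
  slope f p q <= slope f p' q'.
Proof.
move=> ap pp' qq' pq p'q' q'b.
apply: (@le_trans _ _ (slope f p q')); first exact: (convex_slope_leR p q q').
exact: (convex_slope_leL p p' q').
Qed.

Lemma convex_on_refl : convex_on `]- b, - a[ (fun y => f (- y)).
Proof.
move=> y z t; rewrite /= !in_itv /= => /andP[y1 y2] /andP[z1 z2] t0 t1.
have Iy : - y \in `]a, b[ by rewrite in_itv /=; apply/andP; split; lra.
have Iz : - z \in `]a, b[ by rewrite in_itv /=; apply/andP; split; lra.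
have := cf _ _ t Iy Iz t0 t1.
by have -> : t * - y + (1 - t) * - z = - (t * y + (1 - t) * z) by ring.
Qed.

Lemma convex_slopes_pinched_right x e : a < x -> x < b -> 0 < e ->
  exists2 d, 0 < d & x + d < b /\ slopes_pinched f e x (x + d).
Proof.
move=> ax xb e0.
set S := [set slope f x q | q in `]x, b[].
have Sm : S (slope f x ((x + b) / 2)).
  by exists ((x + b) / 2) => //; rewrite /= in_itv /=; apply/andP; split; lra.
have lbS : lbound S (slope f ((a + x) / 2) x).
  move=> y [q]; rewrite /= in_itv /= => /andP[xq qb] <-.
  by apply: convex_slope_le; lra.
have hS : has_inf S.
  by split; [exists (slope f x ((x + b) / 2)) | exists (slope f ((a + x) / 2) x)].
have mS : forall q, x < q -> q < b -> inf S <= slope f x q.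
  by move=> q xq qb; apply: ge_inf; [case: hS | exists q => //; rewrite /= in_itv /= xq qb].
have e2 : 0 < e / 2 by lra.
have [_ [q0 /= /[!in_itv]/= /andP[xq0 q0b] <-] q0m] := inf_adherent e2 hS.
set d := (q0 - x) / 2; have d0 : 0 < d by rewrite /d; lra.
have q0E : q0 = x + 2 * d by rewrite /d; field.
exists d => //; split; first by rewrite /d; lra.
(* [inf S] is the right derivative of [f] at [x]. Slopes on [x, x + d] dominate
   it by monotonicity of slopes and exceed it by at most [e], since
   slope f (x + d) (x + 2 d) = 2 slope f x (x + 2 d) - slope f x (x + d). *)
exists (inf S) => p q xp pq qd; apply/andP; split.
  apply: (le_trans (mS q _ _)); [lra | lra | apply: convex_slope_le; lra].
have := slope_midpoint f x d d0; rewrite -q0E => mid.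
have := mS (x + d) ltac:(lra) ltac:(lra).
have : slope f p q <= slope f (x + d) q0 by apply: convex_slope_le; lra.
lra.
Qed.

End Convex.

End Slopes.

Section ConvexPinched.
Context {R : realType} {a b : R} {f : R -> R}.
Hypothesis cf : convex_on `]a, b[ f.

Lemma convex_slopes_pinched_left x e : a < x -> x < b -> 0 < e ->
  exists2 d, 0 < d & a < x - d /\ slopes_pinched f e (x - d) x.
Proof.
move=> ax xb e0.
have [d d0 [db [m Hm]]] := convex_slopes_pinched_right (convex_on_refl cf) (- x) e
  ltac:(lra) ltac:(lra) e0.
exists d => //; split; first lra.
exists (- m - e) => p q pd pq qx.
by have := Hm (- q) (- p) ltac:(lra) ltac:(lra) ltac:(lra); rewrite slope_refl !opprK; lra.
Qed.

Lemma convex_slopes_pinched x e : a < x -> x < b -> 0 < e ->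
  exists2 d, 0 < d & [/\ a < x - d, x + d < b,
    slopes_pinched f e (x - d) x & slopes_pinched f e x (x + d)].
Proof.
move=> ax xb e0.
have [dr dr0 [drb Hr]] := convex_slopes_pinched_right cf x e ax xb e0.
have [dl dl0 [dla Hl]] := convex_slopes_pinched_left x e ax xb e0.
have dmr : Num.min dl dr <= dr by rewrite ge_min lexx orbT.
have dml : Num.min dl dr <= dl by rewrite ge_min lexx.
exists (Num.min dl dr); first by rewrite lt_min dl0 dr0.
split; [lra | lra | |].
- by apply: slopes_pinchedS Hl; lra.
- by apply: slopes_pinchedS Hr; lra.
Qed.

End ConvexPinched.

Section DC.
Context {R : realType}.
Implicit Types (g : R -> R) (a b e x : R).

Lemma DC_slopes_pinched {a b g} : DC_on `]a, b[ g -> forall x e,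
  a < x -> x < b -> 0 < e -> exists2 d, 0 < d & [/\ a < x - d, x + d < b,
    slopes_pinched g e (x - d) x & slopes_pinched g e x (x + d)].
Proof.
move=> [g1 [g2 [c1 [c2 gE]]]] x e ax xb e0.
have e2 : 0 < e / 2 by lra.
have [d1 d10 [ad1 d1b L1 R1]] := convex_slopes_pinched c1 x (e / 2) ax xb e2.
have [d2 d20 [ad2 d2b L2 R2]] := convex_slopes_pinched c2 x (e / 2) ax xb e2.
set d := Num.min d1 d2.
have dd1 : d <= d1 by rewrite ge_min lexx.
have dd2 : d <= d2 by rewrite ge_min lexx orbT.
have gE' : forall p q, a < p -> q < b -> forall y, p <= y <= q -> g y = g1 y - g2 y.
  move=> p q ap qb y /andP[py yq]; apply: gE.
  by rewrite /= in_itv /=; apply/andP; split; lra.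
have -> : e = e / 2 + e / 2 by field.
exists d; first by rewrite lt_min d10 d20.
split; [lra | lra | |].
- apply: (slopes_pinchedB g1 g2); first by apply: gE'; lra.
  + by apply: slopes_pinchedS L1; lra.
  + by apply: slopes_pinchedS L2; lra.
- apply: (slopes_pinchedB g1 g2); first by apply: gE'; lra.
  + by apply: slopes_pinchedS R1; lra.
  + by apply: slopes_pinchedS R2; lra.
Qed.

End DC.

Section Sparse.
Context {R : realType}.
Implicit Types (A B K : set R) (h : R -> R) (p q u v : R).

Definition sparse A := forall u v, u < v -> exists u' v',
  [/\ u <= u', u' < v', v' <= v & forall y, u' < y -> y < v' -> ~ A y].

Lemma sparse0 : sparse set0.
Proof. by move=> u v uv; exists u, v; split => // y _ _. Qed.

Lemma sparseS {A B} : A `<=` B -> sparse B -> sparse A.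
Proof.
move=> AB sB u v uv; have [u' [v' [uu' u'v' v'v nB]]] := sB u v uv.
by exists u', v'; split => // y u'y yv' /AB; apply: nB.
Qed.

Lemma sparseU A B : sparse A -> sparse B -> sparse (A `|` B).
Proof.
move=> sA sB u v uv.
have [u1 [v1 [uu1 u1v1 v1v nA]]] := sA u v uv.
have [u2 [v2 [u1u2 u2v2 v2v1 nB]]] := sB u1 v1 u1v1.
exists u2, v2; split; [lra | done | lra |].
by move=> y u2y yv2 [/nA|/nB]; apply; lra.
Qed.

Lemma sparse_opp {A} : sparse A -> sparse [set y | A (- y)].
Proof.
move=> sA u v uv; have [u' [v' [h1 h2 h3 nA]]] := sA (- v) (- u) ltac:(lra).
by exists (- v'), (- u'); split; [lra | lra | lra | move=> y y1 y2; apply: nA; lra].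
Qed.

Lemma nowhere_dense_sparse {A} : nowhere_dense A -> sparse A.
Proof.
move=> ndA; apply: (sparseS (@subset_closure _ A)) => u v uv.
have [z [uz zv Kz]] : exists z, [/\ u < z, z < v & ~ closure A z].
  apply: contrapT => allK.
  suff : interior (closure A) ((u + v) / 2) by rewrite ndA.
  apply/nbhs_ballP; exists ((v - u) / 2); first by rewrite /=; lra.
  move=> y; rewrite -ball_normE /= ltr_norml => /andP[y1 y2].
  by apply: contrapT => Ky; apply: allK; exists y; split => //; lra.
have : nbhs z (~` closure A).
  by apply: open_nbhs_nbhs; split => //; exact/closed_openC/closed_closure.
move=> /nbhs_ballP[e /= e0 he].
set r := Num.min (e / 2) (Num.min (z - u) (v - z)).
have r0 : 0 < r by rewrite !lt_min; apply/and3P; split; lra.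
have [r1 r2 r3] : [/\ r <= e / 2, r <= z - u & r <= v - z].
  by rewrite !ge_min !lexx !orbT.
exists (z - r), (z + r); split; [lra | lra | lra |].
move=> y y1 y2; apply: he; rewrite -ball_normE /= ltr_norml.
by apply/andP; split; lra.
Qed.

Lemma sparse_nowhere_dense {A} : sparse A -> nowhere_dense A.
Proof.
move=> sA; apply/seteqP; split => // y0 /nbhs_ballP[e /= e0 he].
have [u [v [h1 uv h3 nA]]] := sA (y0 - e / 2) (y0 + e / 2) ltac:(lra).
have : closure A ((u + v) / 2).
  apply: he; rewrite -ball_normE /= ltr_norml; apply/andP; split; lra.
case/(_ (ball ((u + v) / 2) ((v - u) / 2))).
  by apply/nbhs_ballP; exists ((v - u) / 2) => //=; lra.
move=> y [Ay]; rewrite -ball_normE /= ltr_norml => /andP[y1 y2].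
by apply: (nA y) => //; lra.
Qed.

Lemma sparse_bounded {A c d} : c < d -> A `<=` [set y | c <= y <= d] ->
  (forall u v, c <= u -> u < v -> v <= d -> exists u' v',
     [/\ u <= u', u' < v', v' <= v & forall y, u' < y -> y < v' -> ~ A y]) ->
  sparse A.
Proof.
move=> cd Acd HA u v uv.
have [vc|cv] := leP v c.
  by exists u, v; split => // y uy yv /Acd /andP[cy _]; lra.
have [du|ud] := leP d u.
  by exists u, v; split => // y uy yv /Acd /andP[_ yd]; lra.
have [u1a u1b] : u <= Num.max u c /\ c <= Num.max u c by rewrite !le_max !lexx orbT.
have [v1a v1b] : Num.min v d <= v /\ Num.min v d <= d by rewrite !ge_min !lexx orbT.
have u1v1 : Num.max u c < Num.min v d by rewrite lt_min !gt_max uv cv ud cd.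
have [u' [v' [h1 h2 h3 nA]]] := HA _ _ u1b u1v1 v1b.
by exists u', v'; split => //; lra.
Qed.

Lemma sparse_image_increasing {K h p q} : sparse K -> p < q ->
  {within `[p, q], continuous h} ->
  (forall x y, p <= x -> x < y -> y <= q -> h x < h y) ->
  sparse (h @` (K `&` `[p, q])).
Proof.
move=> sK pq ch inc.
have hmono : {in `[p, q] &, {mono h : x y / x <= y}}.
  apply: le_mono_in => x y; rewrite !in_itv /= => /andP[px _] /andP[_ yq] xy.
  exact: inc.
have hlt x y : x \in `[p, q] -> y \in `[p, q] -> h x < h y -> x < y.
  by move=> xI yI; rewrite !ltNge hmono.
have pI : p \in `[p, q] by rewrite in_itv /= lexx ltW.
have qI : q \in `[p, q] by rewrite in_itv /= lexx ltW.
have hpq : h p < h q by apply: inc; rewrite ?lexx.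
apply: (sparse_bounded hpq).
  by move=> _ [x [_ xI] <-]; rewrite /= !hmono // (itvP xI).
move=> u v pu uv vq.
have ivt y : h p <= y -> y <= h q -> exists2 x, x \in `[p, q] & h x = y.
  move=> py yq; apply: IVT => //; first exact: ltW.
  by rewrite (min_l (ltW hpq)) (max_r (ltW hpq)) py yq.
have [x1 x1I hx1] := ivt u pu ltac:(lra).
have [x2 x2I hx2] := ivt v ltac:(lra) vq.
have x12 : x1 < x2 by apply: hlt; rewrite ?hx1 ?hx2.
have [z1 [z2 [x1z1 z12 z2x2 nK]]] := sK x1 x2 x12.
have [px1 x2q] : p <= x1 /\ x2 <= q by rewrite (itvP x1I) (itvP x2I).
have z1I : z1 \in `[p, q] by rewrite in_itv /=; apply/andP; split; lra.
have z2I : z2 \in `[p, q] by rewrite in_itv /=; apply/andP; split; lra.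
exists (h z1), (h z2); split.
- by rewrite -hx1 hmono.
- by rewrite ltNge hmono // -ltNge.
- by rewrite -hx2 hmono.
- move=> y y1 y2 [x [Kx xI] hxy]; rewrite -hxy in y1 y2.
  by apply: (nK x _ _ Kx); apply: hlt.
Qed.

End Sparse.

Section AlmostSparse.
Context {R : realType}.
Implicit Types (A B : set R) (s : seq (R * R)) (l u v y : R).

Definition covered s y := has (fun i => i.1 <= y <= i.2) s.

Lemma covered_cat s1 s2 y : covered (s1 ++ s2) y = covered s1 y || covered s2 y.
Proof. exact: has_cat. Qed.

Definition total_length s := \sum_(i <- s) (i.2 - i.1).

Definition almost_sparse A l := exists (F : set R) s,
  [/\ sparse F, all (fun i => i.1 <= i.2) s, total_length s <= l &
      A `<=` F `|` [set y | covered s y]].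

Lemma total_length_ge0 {s} : all (fun i => i.1 <= i.2) s -> 0 <= total_length s.
Proof.
move=> /allP ords; rewrite /total_length big_seq; apply: sumr_ge0 => i /ords.
by rewrite subr_ge0.
Qed.

Lemma total_length_covered s u v : all (fun i => i.1 <= i.2) s ->
  (forall y, u <= y -> y <= v -> covered s y) -> u <= v -> v - u <= total_length s.
Proof.
have [n] := ubnP (size s); elim: n s u v => // n IH s u v /ltnSE sn ords covs uv.
have /hasP[j js /andP[j1 j2]] := covs v uv (lexx v).
have pj := perm_to_rem js.
have ords' : all (fun i => i.1 <= i.2) (rem j s).
  by move: ords; rewrite (perm_all _ pj) => /andP[].
have -> : total_length s = j.2 - j.1 + total_length (rem j s).
  by rewrite /total_length (perm_big _ pj) big_cons.
have S0 := total_length_ge0 ords'.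
have [ju|uj] := leP j.1 u; first lra.
suff : j.1 - u <= total_length (rem j s) by lra.
apply/ler_addgt0Pr => e e0; set w := Num.max u (j.1 - e).
have [uw jw] : u <= w /\ j.1 - e <= w by rewrite !le_max !lexx orbT.
have wj : w < j.1 by rewrite gt_max uj; lra.
have : w - u <= total_length (rem j s).
  apply: IH => // [|y uy yw]; first by move: sn; rewrite (perm_size pj).
  have := covs y uy ltac:(lra); rewrite /covered (perm_has _ pj) /=.
  by case/orP => // /andP[]; lra.
lra.
Qed.

Lemma not_covered_nbhs {s y} : ~~ covered s y ->
  exists2 r, 0 < r & forall z, `|z - y| < r -> ~~ covered s z.
Proof.
elim: s => [|i s IH] /=; first by exists 1.
rewrite negb_or => /andP[ni /IH[r r0 Hr]].
have [r1 r10 Hr1] : exists2 r1, 0 < r1 &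
    forall z, `|z - y| < r1 -> ~~ (i.1 <= z <= i.2).
  have [yi1|i1y] := ltP y i.1.
    exists (i.1 - y); first lra.
    by move=> z; rewrite ltr_norml negb_and -!ltNge => /andP[h1 h2]; apply/orP; left; lra.
  have i2y : i.2 < y by move: ni; rewrite i1y /= -ltNge.
  exists (y - i.2); first lra.
  by move=> z; rewrite ltr_norml negb_and -!ltNge => /andP[h1 h2]; apply/orP; right; lra.
exists (Num.min r r1); first by rewrite lt_min r0 r10.
by move=> z; rewrite lt_min => /andP[z1 z2]; rewrite negb_or Hr1 // Hr.
Qed.

Lemma almost_sparseS {A B l l'} : A `<=` B -> l <= l' ->
  almost_sparse B l -> almost_sparse A l'.
Proof.
move=> AB ll' [F [s [sF ords len cov]]]; exists F, s; split => //.
  exact: le_trans ll'.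
by move=> y /AB /cov.
Qed.

Lemma almost_sparseU {A B l1 l2} : almost_sparse A l1 -> almost_sparse B l2 ->
  almost_sparse (A `|` B) (l1 + l2).
Proof.
move=> [F1 [s1 [sF1 ords1 len1 cov1]]] [F2 [s2 [sF2 ords2 len2 cov2]]].
exists (F1 `|` F2), (s1 ++ s2); split; first exact: sparseU.
- by rewrite all_cat ords1.
- by rewrite /total_length big_cat; apply: lerD.
- move=> y [/cov1|/cov2] [Fy|cy].
  + by left; left.
  + by right; rewrite /= covered_cat cy.
  + by left; right.
  + by right; rewrite /= covered_cat cy orbT.
Qed.

Lemma sparse_almost_sparse {A} : sparse A -> almost_sparse A 0.
Proof.
by move=> sA; exists A, [::]; split => //; rewrite /total_length big_nil.
Qed.

Lemma itv_almost_sparse {u v} : u <= v -> almost_sparse [set y | u <= y <= v] (v - u).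
Proof.
move=> uv; exists set0, [:: (u, v)]; split.
- exact: sparse0.
- by rewrite /= uv.
- by rewrite /total_length big_seq1.
- by move=> y uyv; right; rewrite /= /covered /= orbF.
Qed.

Lemma almost_sparse_sparse {A} : (forall l, 0 < l -> almost_sparse A l) -> sparse A.
Proof.
move=> asA u v uv.
have [F [s [sF ords len cov]]] := asA ((v - u) / 2) ltac:(lra).
set u3 := u + (v - u) / 8; set v3 := v - (v - u) / 8.
have [y [uy yv ny]] : exists y, [/\ u3 <= y, y <= v3 & ~~ covered s y].
  apply: contrapT => allc.
  have : v3 - u3 <= total_length s.
    apply: total_length_covered => // [y uy yv|]; last by rewrite /u3 /v3; lra.
    by apply: contrapT => /negP ny; apply: allc; exists y.
  by rewrite /u3 /v3; lra.
have [r r0 Hr] := not_covered_nbhs ny.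
set r' := Num.min r ((v - u) / 8).
have [r1 r2] : r' <= r /\ r' <= (v - u) / 8 by rewrite !ge_min !lexx orbT.
have r'0 : 0 < r' by rewrite lt_min r0 /=; lra.
have [u' [v' [h1 h2 h3 nF]]] := sF (y - r') (y + r') ltac:(lra).
exists u', v'; split; [rewrite /u3 in uy; lra | done | rewrite /v3 in yv; lra |].
move=> z z1 z2 /cov [Fz|cz]; first exact: (nF z).
suff : ~~ covered s z by rewrite cz.
by apply: Hr; rewrite ltr_norml; apply/andP; split; lra.
Qed.

End AlmostSparse.

Section RealInduction.
Context {R : realType}.

Lemma real_induction (P : R -> R -> Prop) c d : c <= d ->
  (forall p q r, P p q -> P q r -> P p r) ->
  (forall x, c <= x -> x <= d -> exists2 del, 0 < del & forall p q, p <= q ->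
     (x - del <= p /\ q <= x) \/ (x <= p /\ q <= x + del) -> P p q) ->
  P c d.
Proof.
move=> cd Ptrans Ploc.
set A := [set t | [/\ c <= t, t <= d & P c t]].
have Ac : A c.
  have [del del0 Hc] := Ploc c (lexx c) cd.
  by split => //; apply: Hc => //; right; split; lra.
have hA : has_sup A by split; [exists c | exists d => t []].
set s := sup A.
have cs : c <= s by exact: sup_upper_bound.
have sd : s <= d by apply: ge_sup; [exists c | move=> t []].
have [del del0 Hs] := Ploc s cs sd.
have [t [ct td Pct]] := sup_adherent del0 hA; rewrite -/s => st.
have ts : t <= s by exact: sup_upper_bound.
set s' := Num.min (s + del) d.
have [s'1 s'2] : s' <= s + del /\ s' <= d by rewrite !ge_min !lexx orbT.
have ss' : s <= s' by rewrite le_min sd andbT; lra.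
have Pcs' : P c s'.
  apply: (Ptrans _ _ _ Pct); apply: (Ptrans _ s); apply: Hs.
  - lra.
  - by left; split; lra.
  - lra.
  - by right; split; lra.
have : s' <= s by apply: sup_upper_bound => //; split => //; lra.
have [sdd|dsd] := leP (s + del) d; first by rewrite /s' (min_l sdd); lra.
by rewrite /s' (min_r (ltW dsd)) in Pcs'.
Qed.

End RealInduction.

Section Image.
Context {R : realType}.
Implicit Types (K : set R) (g : R -> R) (a b c d e l p q : R).

Lemma slopes_pinched_almost_sparse K g e p q : sparse K -> 0 <= e -> p <= q ->
  {within `[p, q], continuous g} -> slopes_pinched g e p q ->
  almost_sparse (g @` (K `&` `[p, q])) (2 * e * (q - p)).
Proof.
move=> sK e0 pq cg pinch; have l0 : 0 <= 2 * e * (q - p) by rewrite !mulr_ge0 //; lra.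
have [qp|ltpq] := eqVneq p q.
  apply: (almost_sparseS _ _ (itv_almost_sparse (lexx (g p)))); last lra.
  move=> _ [x [_ /= /[!in_itv]/= /andP[px xq]] <-].
  have -> : x = p by apply/eqP; rewrite eq_le px qp xq.
  by rewrite /= lexx.
have {}pq : p < q by rewrite lt_neqAle ltpq.
have [inc|dec|flat] := slopes_pinched_cases pinch.
- exact: almost_sparseS (sparse_almost_sparse (sparse_image_increasing sK pq cg inc)).
- have dec' x y : p <= x -> x < y -> y <= q -> - g x < - g y.
    by move=> *; rewrite ltrN2; apply: dec.
  have cg' : {within `[p, q], continuous (fun x => - g x)}.
    by move=> x; apply: continuousN; apply: cg.
  have := sparse_opp (sparse_image_increasing sK pq cg' dec').
  move/sparse_almost_sparse; apply: almost_sparseS => //.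
  by move=> _ [x Sx <-]; exists x.
- have [g1 g2] := andP (flat p (lexx p) (ltW pq)).
  apply: (almost_sparseS _ _ (itv_almost_sparse (le_trans g1 g2))); last lra.
  by move=> _ [x [_ /= /[!in_itv]/= /andP[px xq]] <-]; apply: flat.
Qed.

Lemma DC_image_almost_sparse {a b g K c d l} : DC_on `]a, b[ g ->
  {within `[a, b], continuous g} -> sparse K ->
  a < c -> c <= d -> d < b -> 0 < l -> almost_sparse (g @` (K `&` `[c, d])) l.
Proof.
move=> dc cg sK ac cd db l0.
set e := l / (2 * (d - c + 1)).
have dc1 : 0 < 2 * (d - c + 1) by lra.
have e0 : 0 < e by exact: divr_gt0.
have le : 2 * e * (d - c) <= l.
  have : e * (2 * (d - c + 1)) = l by rewrite /e divfK // lt0r_neq0.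
  lra.
suff : almost_sparse (g @` (K `&` `[c, d])) (2 * e * (d - c)) by apply: almost_sparseS.
apply: (real_induction
  (fun p q => almost_sparse (g @` (K `&` `[p, q])) (2 * e * (q - p)))) => //.
  move=> p q r Hpq Hqr; apply: (almost_sparseS _ _ (almost_sparseU Hpq Hqr)); last lra.
  move=> _ [x [Kx /= /[!in_itv]/= /andP[px xr]] <-].
  have [xq|qx] := leP x q; [left | right]; exists x => //; split => //=.
    by rewrite in_itv /= px.
  by rewrite in_itv /= xr (ltW qx).
move=> x cx xd; have [del del0 [adel delb Lp Rp]] := DC_slopes_pinched dc x e
  ltac:(lra) ltac:(lra) e0.
exists del => // p q pq loc; apply: slopes_pinched_almost_sparse => //; first lra.
  apply: continuous_subspaceW cg => y; rewrite /= !in_itv /= => /andP[py yq].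
  by apply/andP; split; case: loc; lra.
by case: loc => -[] ? ?; [apply: slopes_pinchedS Lp | apply: slopes_pinchedS Rp]; lra.
Qed.

End Image.

Section Endpoints.
Context {R : realType}.

Lemma within_continuous_ball {A : set R} {f : R -> R} {x e : R} :
  {within A, continuous f} -> A x -> 0 < e ->
  exists2 d, 0 < d & forall y, A y -> `|x - y| < d -> `|f x - f y| < e.
Proof.
move=> cf Ax e0.
have /cvgr_dist_lt/(_ e e0) := proj1 (subspace_continuousP _ _) cf x Ax.
by rewrite near_withinE => /nbhs_ballP[d /= d0 H]; exists d => // y Ay xy; apply: H.
Qed.

Lemma continuous_near_endpoints {a b e : R} {g : R -> R} : a < b ->
  {within `[a, b], continuous g} -> 0 < e -> exists c d, [/\ a < c, c <= d, d < b,
    forall x, a <= x -> x <= c -> g a - e <= g x <= g a + e &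
    forall x, d <= x -> x <= b -> g b - e <= g x <= g b + e].
Proof.
move=> ab cg e0.
have [aI bI] : `[a, b]%classic a /\ `[a, b]%classic b by rewrite /= !in_itv /= !lexx ltW.
have [da da0 Ha] := within_continuous_ball cg aI e0.
have [db db0 Hb] := within_continuous_ball cg bI e0.
set ra := Num.min (da / 2) ((b - a) / 3); set rb := Num.min (db / 2) ((b - a) / 3).
have [ra1 ra2] : ra <= da / 2 /\ ra <= (b - a) / 3 by rewrite !ge_min !lexx orbT.
have [rb1 rb2] : rb <= db / 2 /\ rb <= (b - a) / 3 by rewrite !ge_min !lexx orbT.
have ra0 : 0 < ra by rewrite lt_min; apply/andP; split; lra.
have rb0 : 0 < rb by rewrite lt_min; apply/andP; split; lra.
have xI x : a <= x -> x <= b -> `[a, b]%classic x by rewrite /= in_itv /= => -> ->.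
exists (a + ra), (b - rb); split; [lra | lra | lra | |].
- move=> x ax xc; rewrite -ler_distlC; apply/ltW/Ha; first by apply: xI; lra.
  by rewrite distrC ger0_norm; lra.
- move=> x dx xb; rewrite -ler_distlC; apply/ltW/Hb; first by apply: xI; lra.
  by rewrite ger0_norm; lra.
Qed.

End Endpoints.

Theorem proposition2p15 (R : realType) (a b : R) (g : R -> R) (P : set R) :
  {within `[a, b], continuous g} ->
  DC_on `]a, b[ g ->
  P `<=` `[a, b] ->
  nowhere_dense P ->
  nowhere_dense (g @` P).
Proof.
move=> cg dc PI nP; apply/sparse_nowhere_dense/almost_sparse_sparse => l l0.
have [ba|ab] := leP b a.
  apply: (almost_sparseS _ _ (itv_almost_sparse (lexx (g a)))); last lra.
  move=> _ [x /PI /= /[!in_itv]/= /andP[ax xb] <-].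
  have -> : x = a by apply/eqP; rewrite eq_le ax andbT (le_trans xb ba).
  by rewrite /= lexx.
have [l8 l2] : 0 < l / 8 /\ 0 < l / 2 by split; lra.
have [c [d [ac cd db near_a near_b]]] := continuous_near_endpoints ab cg l8.
have mid := DC_image_almost_sparse dc cg (nowhere_dense_sparse nP) ac cd db l2.
have [ia ib] : g a - l / 8 <= g a + l / 8 /\ g b - l / 8 <= g b + l / 8 by split; lra.
have ends := almost_sparseU (itv_almost_sparse ia) (itv_almost_sparse ib).
apply: (almost_sparseS _ _ (almost_sparseU ends mid)); last lra.
move=> _ [x Px <-]; have /= /[!in_itv]/= /andP[ax xb] := PI x Px.
have [xc|cx] := leP x c; first by left; left; apply: near_a.
have [dx|xd] := leP d x; first by left; right; apply: near_b.
by right; exists x => //; split => //=; rewrite in_itv /= !ltW.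
Qed.
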